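(* Let $n \geq 3$ and let $S$ be a $4$-cap free, $n$-cup free configuration of size at least $\binom{n-1}{2}+1$, with a fixed slope labeling. For each $1 \le i \le n-1$ let $R_i(S) = \{p\in S : \beta(p)=i\}$. Then $R_i(S)$ is nonempty for every $1 \leq i \leq n-1$.
   Context: A configuration is a finite set $S$ of points with a linear order $<$ and, for every $3$-element subset, an arbitrary assignment declaring it either a cap or a cup. Points $x_1<\cdots<x_a$ form an $a$-cup (resp. $a$-cap) if every consecutive triple $\{x_{i-1},x_i,x_{i+1}\}$, $1<i<a$, is assigned cup (resp. cap); $1$- and $2$-element sets are both caps and cups. The length of a cup is its number of points; a cup $x_1\cdots x_a$ ends with $x_a$. An edge is a pair $x<y$, written $xy$. A slope labeling of a $4$-cap free configuration is an assignment $s(xy)\in\{1,2\}$ to every edge such that for any $x<y<z$, $s(xy)\le s(yz)$ implies $\{x,y,z\}$ is a $3$-cup. For $p \in S$, $\beta(p)$ denotes the maximum length of a cup that ends with $p$. *)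

From mathcomp Require Import all_boot.
Set Implicit Arguments. Unset Strict Implicit. Unset Printing Implicit Defensive.

(* A configuration of size N: points 'I_N with their natural linear order.
   cupf x y z (meaningful for x < y < z) tells whether the triple {x,y,z}
   is a cup; otherwise it is a cap. *)
Section Config.
Variable N : nat.
Variable cupf : 'I_N -> 'I_N -> 'I_N -> bool.

Fixpoint consec3 (P : 'I_N -> 'I_N -> 'I_N -> bool) (s : seq 'I_N) : bool :=
  match s with
  | x :: ((y :: z :: _) as t) => P x y z && consec3 P t
  | _ => true
  end.

Definition incr (s : seq 'I_N) : bool := sorted (fun x y : 'I_N => x < y) s.

Definition is_cup (s : seq 'I_N) : bool := incr s && consec3 cupf s.
Definition is_cap (s : seq 'I_N) : bool :=
  incr s && consec3 (fun x y z => ~~ cupf x y z) s.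

Definition cap4_free : Prop := forall s, is_cap s -> size s < 4.
Definition cup_free (n : nat) : Prop := forall s, is_cup s -> size s < n.

Definition slope_labeling (sl : 'I_N -> 'I_N -> nat) : Prop :=
  (forall x y : 'I_N, x < y -> (sl x y == 1) || (sl x y == 2)) /\
  (forall x y z : 'I_N, x < y -> y < z -> sl x y <= sl y z -> cupf x y z).

(* beta p = maximum length of a cup ending with p; a cup is identified with
   its point set, listed in increasing order by enum. *)
Definition beta (p : 'I_N) : nat :=
  \max_(A : {set 'I_N} | is_cup (enum A) && (p \in A) && [forall x in A, x <= p])
     #|A|.

Definition Rset (i : nat) : {set 'I_N} := [set p | beta p == i].
End Config.

(* Every value in [1, beta p] is attained by beta: dropping the last point of a
   longest cup ending at p leaves a cup ending at an earlier point.  A slope-2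
   edge p q extends every cup ending at p to one ending at q, so beta strictly
   increases along it.  Hence all edges inside a level set R_b have slope 1, the
   slope-labeling axiom makes R_b a cup ending at its last point, and #|R_b| <= b.
   If R_i were empty, beta would only take values in [1, i-1], a subset of
   [1, n-2], so N <= 1 + ... + (n-2) = C(n-1, 2). *)

From Pilot Require Import Defs.
From mathcomp Require Import all_boot zify.
Set Implicit Arguments. Unset Strict Implicit. Unset Printing Implicit Defensive.

Section Enum.
Variable N : nat.
Implicit Types (A : {set 'I_N}) (p q : 'I_N) (s : seq 'I_N)
  (P : 'I_N -> 'I_N -> 'I_N -> bool).

Lemma incr_enum A : incr (enum A).
Proof.
rewrite /incr /enum_mem -enumT.
apply: sorted_filter => [x y z|]; first exact: ltn_trans.
by have := iota_ltn_sorted 0 N; rewrite -val_enum_ord sorted_map.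
Qed.

Lemma exists_set_max A :
  A != set0 -> exists2 q, q \in A & {in A, forall x : 'I_N, x <= q}.
Proof.
case/set0Pn=> x0 x0A; exists [arg max_(i > x0 in A) (i : nat)].
  by case: arg_maxnP.
by case: arg_maxnP => // q _ qmax x /qmax.
Qed.

Lemma enum_max_rcons A p :
  p \in A -> {in A, forall x : 'I_N, x <= p} -> enum A = rcons (enum (A :\ p)) p.
Proof.
move=> pA le_Ap; apply: (irr_sorted_eq _ _ (incr_enum A)) => [x y z|x||].
- exact: ltn_trans.
- exact: ltnn.
- have := incr_enum (A :\ p); rewrite /incr.
  have := mem_enum (mem (A :\ p)).
  case: (enum (A :\ p)) => [|a s] //= mem_as sorted_as.
  rewrite rcons_path sorted_as /=.
  have := mem_last a s; rewrite mem_as !inE => /andP[lastNp /le_Ap].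
  by rewrite leq_eqVlt val_eqE (negbTE lastNp).
- move=> x; rewrite mem_rcons in_cons !mem_enum !inE.
  by case: eqP => // ->.
Qed.

Lemma lt_max_setD1 A p x :
  {in A, forall y : 'I_N, y <= p} -> x \in A :\ p -> x < p.
Proof.
move=> le_Ap; rewrite !inE => /andP[x_neq_p /le_Ap].
by rewrite leq_eqVlt val_eqE (negbTE x_neq_p).
Qed.

Lemma notin_gt_max A p q : {in A, forall x : 'I_N, x <= p} -> p < q -> q \notin A.
Proof. by move=> le_Ap lt_pq; apply: contraL lt_pq => /le_Ap; rewrite leqNgt. Qed.

Lemma consec3_rcons3 P s x y z :
  consec3 P (rcons (rcons (rcons s x) y) z) =
  consec3 P (rcons (rcons s x) y) && P x y z.
Proof.
elim: s => [|a [|b [|c s]] IH] /=; rewrite ?andbT ?andbA //.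
by move: IH => /= ->; rewrite andbA.
Qed.

Lemma consec3_rconsK P s z : consec3 P (rcons s z) -> consec3 P s.
Proof. by elim: s => [|a [|b [|c s]] IH] //= /andP[-> /IH]. Qed.

Lemma incr_consec3 P s :
  {in s &, forall x y : 'I_N,
     {in s, forall z : 'I_N, x < y -> y < z -> P x y z}} ->
  incr s -> consec3 P s.
Proof.
elim: s => [|a [|b [|c s]] IH] // Ps; rewrite /incr /= => /and3P[ab bc cs].
rewrite Ps ?inE ?eqxx ?orbT //=; apply: IH; last by rewrite /incr /= bc.
by move=> x y xs ys z zs; apply: Ps; rewrite inE ?xs ?ys ?zs orbT.
Qed.

End Enum.

Section Beta.
Variables (N : nat) (cupf : 'I_N -> 'I_N -> 'I_N -> bool).
Implicit Types (A : {set 'I_N}) (p q : 'I_N).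
Local Notation beta := (beta cupf).
Local Notation is_cup := (is_cup cupf).

Definition cup_ending p A : bool :=
  is_cup (enum A) && (p \in A) && [forall x in A, x <= p].

Lemma cup_endingP p A :
  reflect [/\ is_cup (enum A), p \in A & {in A, forall x : 'I_N, x <= p}]
          (cup_ending p A).
Proof.
by apply: (iffP andP) => [[/andP[-> ->] /forall_inP] | [-> -> /forall_inP]].
Qed.

Lemma card_le_beta p A : cup_ending p A -> #|A| <= beta p.
Proof. exact: (@leq_bigmax_cond _ (cup_ending p) (fun A => #|A|) A). Qed.

Lemma cup_ending1 p : cup_ending p [set p].
Proof.
apply/cup_endingP; split; rewrite ?set11 //; last by move=> x /set1P ->.
by rewrite /is_cup enum_set1.
Qed.

Lemma beta_witness p : exists2 A, cup_ending p A & #|A| = beta p.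
Proof.
have [|A pA maxA] := eq_bigmax_cond (fun A => #|A|) (_ : 0 < #|cup_ending p|).
  by apply/card_gt0P; exists [set p]; exact: cup_ending1.
by exists A; rewrite // /Defs.beta -maxA.
Qed.

Lemma cup_ending_setD1 p q A :
  cup_ending p A -> q \in A :\ p -> {in A :\ p, forall x : 'I_N, x <= q} ->
  cup_ending q (A :\ p).
Proof.
case/cup_endingP=> cupA pA le_Ap qA le_Aq; apply/cup_endingP; split=> //.
rewrite /Defs.is_cup incr_enum.
by move: cupA => /andP[_]; rewrite (enum_max_rcons pA le_Ap) => /consec3_rconsK.
Qed.

Lemma exists_beta_pred p :
  1 < beta p -> exists2 q : 'I_N, q < p & (beta p).-1 <= beta q.
Proof.
have [A pA cardA] := beta_witness p; rewrite -cardA => gt1_A.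
have /cup_endingP[_ pA0 le_Ap] := pA.
have [|q qA le_Aq] := @exists_set_max _ (A :\ p).
  by rewrite -card_gt0; move: gt1_A; rewrite (cardsD1 p) pA0.
exists q; first exact: lt_max_setD1 qA.
by rewrite (cardsD1 p) pA0; apply/card_le_beta/(cup_ending_setD1 pA).
Qed.

Lemma beta_downward p k : 0 < k <= beta p -> exists q, beta q = k.
Proof.
have [m] := ubnP p; elim: m p => // m IH p; rewrite ltnS => le_pm.
case/andP=> k_gt0 le_kb.
have [<-|ne_kb] := eqVneq (beta p) k; first by exists p.
have /exists_beta_pred[q lt_qp le_bq] : 1 < beta p by lia.
by apply: (IH q); lia.
Qed.

End Beta.

Section SlopeLabeling.
Variables (N : nat) (cupf : 'I_N -> 'I_N -> 'I_N -> bool).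
Variable sl : 'I_N -> 'I_N -> nat.
Hypothesis slP : slope_labeling cupf sl.
Implicit Types (A : {set 'I_N}) (p q : 'I_N).
Local Notation beta := (beta cupf).
Local Notation Rset := (Rset cupf).

Lemma cup_ending_setU1 p q A :
  cup_ending cupf p A -> p < q -> sl p q = 2 -> cup_ending cupf q (q |: A).
Proof.
case/cup_endingP=> cupA pA le_Ap lt_pq sl_pq.
have le_qA_q : {in q |: A, forall x : 'I_N, x <= q}.
  by move=> x /setU1P[-> // | /le_Ap le_xp]; apply: leq_trans le_xp (ltnW lt_pq).
apply/cup_endingP; split; rewrite ?setU11 //.
rewrite /Defs.is_cup incr_enum (enum_max_rcons (setU11 q A) le_qA_q).
rewrite setU1K ?(notin_gt_max le_Ap lt_pq) //=.
move: cupA => /andP[_]; rewrite (enum_max_rcons pA le_Ap).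
case/lastP: (enum (A :\ p)) (mem_enum (mem (A :\ p))) => [|s x] // mem_sx.
have lt_xp : x < p.
  by apply: lt_max_setD1 le_Ap _; rewrite -mem_sx mem_rcons mem_head.
rewrite consec3_rcons3 => ->; apply: slP.2 => //.
by rewrite sl_pq; case/orP: (slP.1 _ _ lt_xp) => /eqP ->.
Qed.

Lemma beta_lt_slope2 p q : p < q -> sl p q = 2 -> beta p < beta q.
Proof.
move=> lt_pq sl_pq; have [A pA <-] := beta_witness cupf p.
have /card_le_beta := cup_ending_setU1 pA lt_pq sl_pq.
have /cup_endingP[_ _ le_Ap] := pA.
by rewrite cardsU1 (notin_gt_max le_Ap lt_pq).
Qed.

Lemma slope1_Rset b x y : x \in Rset b -> y \in Rset b -> x < y -> sl x y = 1.
Proof.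
rewrite !inE => /eqP beta_x /eqP beta_y lt_xy.
case/orP: (slP.1 _ _ lt_xy) => /eqP // /(beta_lt_slope2 lt_xy).
by rewrite beta_x beta_y ltnn.
Qed.

Lemma card_Rset b : #|Rset b| <= b.
Proof.
have [->|/exists_set_max[p pR le_Rp]] := eqVneq (Rset b) set0.
  by rewrite cards0.
have /card_le_beta : cup_ending cupf p (Rset b).
  apply/cup_endingP; split=> //; rewrite /Defs.is_cup incr_enum.
  apply: incr_consec3 (incr_enum _) => x y xR yR z zR lt_xy lt_yz.
  rewrite !mem_enum in xR yR zR.
  by apply: slP.2 => //; rewrite (slope1_Rset xR yR) ?(slope1_Rset yR zR).
by move: pR; rewrite inE => /eqP ->.
Qed.

Lemma card_le_bin2 m : (forall p, beta p < m) -> N <= 'C(m, 2).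
Proof.
move=> lt_beta_m; rewrite -[N]card_ord -sum1_card -bin2_sum big_mkord.
rewrite (partition_big (fun p => Ordinal (lt_beta_m p)) xpredT) //=.
apply: leq_sum => b _; apply: leq_trans (card_Rset b).
by rewrite -sum1_card; apply/eq_leq/eq_bigl => x; rewrite inE.
Qed.

End SlopeLabeling.

Theorem lemma5p9 (n N : nat) (cupf : 'I_N -> 'I_N -> 'I_N -> bool)
  (sl : 'I_N -> 'I_N -> nat) :
  3 <= n ->
  cap4_free cupf ->
  cup_free cupf n ->
  'C(n.-1, 2) + 1 <= N ->
  slope_labeling cupf sl ->
  forall i, 1 <= i <= n.-1 -> Rset cupf i != set0.
Proof.
move=> _ _ _ le_N slP i /andP[i_gt0 le_in]; apply/negP => /eqP Ri0.
have lt_beta_i p : beta cupf p < i.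
  rewrite ltnNge; apply/negP => le_i_beta.
  have [q beta_q] : exists q, beta cupf q = i.
    by apply: (beta_downward (p := p)); rewrite i_gt0.
  by have := in_set0 q; rewrite -Ri0 inE beta_q eqxx.
have := card_le_bin2 slP (fun p => leq_trans (lt_beta_i p) le_in).
lia.
Qed.
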